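(* Let $p=(z_0,\tau_0,Y_0)\in Son'$ with $z_0\neq0$ and $Y_0\neq0$, and suppose the Hugoniot$'$ curve $\mathcal{H}'(p)$ meets $\mathcal{C}$ in two distinct points $q_1,q_2$. Then $\sigma(p)$ lies strictly between $\sigma(q_1)$ and $\sigma(q_2)$ if and only if $(b_1+1)z_0^2<1$.
   Context: Fix real constants $a_1,a_2,a_3,a_4$ and $b_1>1$, and put $c=a_3-a_2>0$. Coordinates $(z,\tau,Y)\in\mathbb{R}^3$. Define $\widetilde U(z,\tau)=\frac{2cz}{z^2+1}+c\tau(z^2-1)$, $V_1(z,\tau)=\frac{c}{z^2+1}+c\tau z$, $U=(\widetilde U-a_1+a_4)/b_1$, $V=V_1-a_3$; the point $(z,\tau,Y)$ has right state $W'=(U-zY/2,\,V-Y/2)$ and shock speed $\sigma(z,\tau,Y)=\frac{c}{b_1}[(b_1+1)z^2-1]\tau+\frac{c}{b_1}\frac{(b_1+2)z}{z^2+1}+\sigma_0$, $\sigma_0=[(b_1+1)a_4-a_1]/b_1$. For $p\in\mathbb{R}^3$, the Hugoniot$'$ curve is $\mathcal{H}'(p)=\{q: W'(q)=W'(p)\}$. Let $\mathcal{C}=\{Y=0\}$ and let $Son'$ be the zero set of $c\,z[(b_1+1)z^2+3]\tau-[(b_1+1)z^2-1]\frac{Y}{2}+\frac{c[(b_1-1)z^2+1]}{z^2+1}$. *)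

From Stdlib Require Import Reals.
Open Scope R_scope.

Definition pt := (R * R * R)%type.
Definition pz (p : pt) : R := fst (fst p).
Definition ptau (p : pt) : R := snd (fst p).
Definition pY (p : pt) : R := snd p.

Section Model.
Variables a1 a2 a3 a4 b1 : R.

Definition cc : R := a3 - a2.

Definition Utilde (z tau : R) : R := 2 * cc * z / (z ^ 2 + 1) + cc * tau * (z ^ 2 - 1).
Definition V1 (z tau : R) : R := cc / (z ^ 2 + 1) + cc * tau * z.
Definition UU (z tau : R) : R := (Utilde z tau - a1 + a4) / b1.
Definition VV (z tau : R) : R := V1 z tau - a3.

Definition Wp (p : pt) : R * R :=
  (UU (pz p) (ptau p) - pz p * pY p / 2, VV (pz p) (ptau p) - pY p / 2).

Definition sigma0 : R := ((b1 + 1) * a4 - a1) / b1.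

Definition shock_speed (p : pt) : R :=
  cc / b1 * ((b1 + 1) * pz p ^ 2 - 1) * ptau p
  + cc / b1 * ((b1 + 2) * pz p / (pz p ^ 2 + 1)) + sigma0.

Definition Hugoniot' (p q : pt) : Prop := Wp q = Wp p.

Definition inC (q : pt) : Prop := pY q = 0.

Definition Son' (p : pt) : Prop :=
  let z := pz p in let tau := ptau p in let Y := pY p in
  cc * z * ((b1 + 1) * z ^ 2 + 3) * tau - ((b1 + 1) * z ^ 2 - 1) * (Y / 2)
  + cc * ((b1 - 1) * z ^ 2 + 1) / (z ^ 2 + 1) = 0.

End Model.

(* On the plane Y = 0 the Hugoniot' condition fixes the values A, B of Utilde and V1.
   Since z Utilde - (z^2 - 1) V1 = c identically, the z-coordinates of the two
   intersection points are the two roots of B z^2 - A z + (c - B), and the shock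
   speed there is the affine function z B + A/b1 + sigma0 of z.  By Vieta, the
   product of the two speed gaps sigma(p) - sigma(q_i) is a symmetric expression
   which, on Son', collapses to Y0^2 ((b1 + 1) z0^2 - 1) / 2; sigma(p) lies strictly
   between the two speeds exactly when this product is negative. *)
From Stdlib Require Import Reals Lra Psatz.
Open Scope R_scope.

Lemma strictly_between_iff_mul_neg (x a b : R) :
  (a < x < b \/ b < x < a) <-> (x - a) * (x - b) < 0.
Proof.
  split.
  - intros [[] | []]; nra.
  - intro Hneg.
    destruct (Rlt_or_le x a); [right | left]; split; try nra.
    destruct (Rle_lt_or_eq_dec a x) as [|<-]; nra.
Qed.

Lemma quadratic_roots_sum_prod (B A C z1 z2 : R) :
  z1 <> z2 ->
  B * z1 ^ 2 - A * z1 + C = 0 -> B * z2 ^ 2 - A * z2 + C = 0 ->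
  B * (z1 + z2) = A /\ B * (z1 * z2) = C.
Proof.
  intros Hne H1 H2.
  assert (Hsum : B * (z1 + z2) = A).
  { apply (Rmult_eq_reg_l (z1 - z2)); [nra | lra]. }
  split; [exact Hsum | nra].
Qed.

Lemma sq_plus1_neq0 (z : R) : z ^ 2 + 1 <> 0.
Proof. nra. Qed.

Section HugoniotOnC.

Variables a1 a2 a3 a4 b1 : R.
Hypothesis b1_neq0 : b1 <> 0.

Lemma Utilde_V1_invariant (z t : R) :
  z * Utilde a2 a3 z t - (z ^ 2 - 1) * V1 a2 a3 z t = cc a2 a3.
Proof. unfold Utilde, V1. field. apply sq_plus1_neq0. Qed.

Lemma cc_mul_tau (z t : R) :
  cc a2 a3 * t = z * V1 a2 a3 z t - Utilde a2 a3 z t + cc a2 a3 * z / (z ^ 2 + 1).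
Proof. unfold Utilde, V1. field. apply sq_plus1_neq0. Qed.

Lemma pt_eq_of_Utilde_V1 (q q' : pt) :
  cc a2 a3 <> 0 ->
  pz q = pz q' -> pY q = pY q' ->
  Utilde a2 a3 (pz q) (ptau q) = Utilde a2 a3 (pz q') (ptau q') ->
  V1 a2 a3 (pz q) (ptau q) = V1 a2 a3 (pz q') (ptau q') ->
  q = q'.
Proof.
  intros Hc Hz HY HU HV.
  assert (Ht : ptau q = ptau q').
  { apply (Rmult_eq_reg_l (cc a2 a3)); [|exact Hc].
    rewrite (cc_mul_tau (pz q) (ptau q)), (cc_mul_tau (pz q') (ptau q')), HU, HV, Hz. reflexivity. }
  destruct q as [[z t] Y], q' as [[z' t'] Y'].
  unfold pz, ptau, pY in *; simpl in *. subst. reflexivity.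
Qed.

Lemma shock_speed_Utilde_V1 (q : pt) :
  shock_speed a1 a2 a3 a4 b1 q =
  pz q * V1 a2 a3 (pz q) (ptau q) + Utilde a2 a3 (pz q) (ptau q) / b1 + sigma0 a1 a4 b1.
Proof. unfold shock_speed, Utilde, V1. field. split; [apply sq_plus1_neq0 | exact b1_neq0]. Qed.

Definition Utilde_C (p : pt) : R := Utilde a2 a3 (pz p) (ptau p) - b1 * pz p * pY p / 2.
Definition V1_C (p : pt) : R := V1 a2 a3 (pz p) (ptau p) - pY p / 2.

Lemma Hugoniot'_inC (p q : pt) :
  Hugoniot' a1 a2 a3 a4 b1 p q -> inC q ->
  Utilde a2 a3 (pz q) (ptau q) = Utilde_C p /\ V1 a2 a3 (pz q) (ptau q) = V1_C p.
Proof.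
  unfold Hugoniot', Wp, inC, UU, VV, Utilde_C, V1_C.
  intros H HY. rewrite HY in H. injection H as HU HV. split.
  - apply (Rmult_eq_reg_r (/ b1)); [|apply Rinv_neq_0_compat, b1_neq0].
    transitivity ((Utilde a2 a3 (pz q) (ptau q) - a1 + a4) / b1 - pz q * 0 / 2 + (a1 - a4) / b1).
    + field. exact b1_neq0.
    + rewrite HU. field. exact b1_neq0.
  - lra.
Qed.

Lemma Hugoniot'_inC_root (p q : pt) :
  Hugoniot' a1 a2 a3 a4 b1 p q -> inC q ->
  V1_C p * pz q ^ 2 - Utilde_C p * pz q + (cc a2 a3 - V1_C p) = 0.
Proof.
  intros H HC. destruct (Hugoniot'_inC p q H HC) as [HU HV].
  pose proof (Utilde_V1_invariant (pz q) (ptau q)) as E.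
  rewrite HU, HV in E. lra.
Qed.

Lemma shock_speed_Hugoniot'_inC (p q : pt) :
  Hugoniot' a1 a2 a3 a4 b1 p q -> inC q ->
  shock_speed a1 a2 a3 a4 b1 q = pz q * V1_C p + Utilde_C p / b1 + sigma0 a1 a4 b1.
Proof.
  intros H HC. destruct (Hugoniot'_inC p q H HC) as [HU HV].
  rewrite shock_speed_Utilde_V1, HU, HV. reflexivity.
Qed.

Lemma Son'_shock_speed_gaps (p : pt) (w1 w2 : R) :
  Son' a2 a3 b1 p ->
  V1_C p * (w1 + w2) = Utilde_C p ->
  V1_C p * (w1 * w2) = cc a2 a3 - V1_C p ->
  (shock_speed a1 a2 a3 a4 b1 p - (w1 * V1_C p + Utilde_C p / b1 + sigma0 a1 a4 b1)) *
  (shock_speed a1 a2 a3 a4 b1 p - (w2 * V1_C p + Utilde_C p / b1 + sigma0 a1 a4 b1))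
  = pY p ^ 2 * ((b1 + 1) * pz p ^ 2 - 1) / 2.
Proof.
  unfold Son'. rewrite shock_speed_Utilde_V1.
  set (z0 := pz p). set (t0 := ptau p). set (Y0 := pY p). set (c := cc a2 a3).
  intros HSon Hsum Hprod.
  set (S := V1 a2 a3 z0 t0 + Y0 / 2).
  assert (Hgap : forall w, z0 * V1 a2 a3 z0 t0 + Utilde a2 a3 z0 t0 / b1 + sigma0 a1 a4 b1
                         - (w * V1_C p + Utilde_C p / b1 + sigma0 a1 a4 b1) = z0 * S - w * V1_C p).
  { intro w. unfold Utilde_C, S. fold z0 t0 Y0. field. exact b1_neq0. }
  rewrite !Hgap.
  transitivity (z0 ^ 2 * S ^ 2 - z0 * S * Utilde_C p + V1_C p * (c - V1_C p)).
  { rewrite <- Hsum, <- Hprod. ring. }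
  (* subtract Y0/2 times the (vanishing) defining expression of Son' *)
  rewrite <- (Rminus_0_r (_ + _)), <- (Rmult_0_r (Y0 / 2)), <- HSon.
  unfold S, Utilde_C, V1_C, Utilde, V1. fold z0 t0 Y0 c.
  field. apply sq_plus1_neq0.
Qed.

End HugoniotOnC.

Theorem mainTheorem12 (a1 a2 a3 a4 b1 : R) (p q1 q2 : pt) :
  1 < b1 ->
  0 < cc a2 a3 ->
  Son' a2 a3 b1 p ->
  pz p <> 0 ->
  pY p <> 0 ->
  q1 <> q2 ->
  (forall q : pt,
     (Hugoniot' a1 a2 a3 a4 b1 p q /\ inC q) <-> (q = q1 \/ q = q2)) ->
  ((shock_speed a1 a2 a3 a4 b1 q1 < shock_speed a1 a2 a3 a4 b1 p < shock_speed a1 a2 a3 a4 b1 q2 \/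
    shock_speed a1 a2 a3 a4 b1 q2 < shock_speed a1 a2 a3 a4 b1 p < shock_speed a1 a2 a3 a4 b1 q1)
   <-> (b1 + 1) * pz p ^ 2 < 1).
Proof.
  intros Hb1 Hc HSon _ HY Hne Hcurve.
  assert (Hb0 : b1 <> 0) by lra.
  destruct (proj2 (Hcurve q1) (or_introl eq_refl)) as [H1 C1].
  destruct (proj2 (Hcurve q2) (or_intror eq_refl)) as [H2 C2].
  assert (Hz : pz q1 <> pz q2).
  { intro Hz. apply Hne.
    destruct (Hugoniot'_inC _ _ _ _ _ Hb0 _ _ H1 C1) as [U1 V1'].
    destruct (Hugoniot'_inC _ _ _ _ _ Hb0 _ _ H2 C2) as [U2 V2'].
    apply (pt_eq_of_Utilde_V1 a2 a3); try lra; unfold inC in *; congruence. }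
  destruct (quadratic_roots_sum_prod _ _ _ _ _ Hz
              (Hugoniot'_inC_root _ _ _ _ _ Hb0 _ _ H1 C1)
              (Hugoniot'_inC_root _ _ _ _ _ Hb0 _ _ H2 C2)) as [Hsum Hprod].
  rewrite strictly_between_iff_mul_neg.
  rewrite (shock_speed_Hugoniot'_inC _ _ _ _ _ Hb0 _ _ H1 C1),
          (shock_speed_Hugoniot'_inC _ _ _ _ _ Hb0 _ _ H2 C2).
  rewrite (Son'_shock_speed_gaps _ _ _ _ _ Hb0 _ _ _ HSon Hsum Hprod).
  assert (HY2 : 0 < pY p ^ 2) by (rewrite <- Rsqr_pow2; apply Rsqr_pos_lt, HY).
  split; intro H; nra.
Qed.
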